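(* Let $B$ be a singleton board with $n$ columns, and let $M$ be the maximum entry of its $m$-level root vector $\xi_m(B)$. If the first occurrence of $M$ in $\xi_m(B)$ is in position $j$, then $B$ is connected by a sequence of edges in the $m$-level rook equivalence graph $G_m(B)$ to a board $B'$ whose $m$-level root vector $\xi_m(B')$ agrees with $\xi_m(B)$ in the first $j$ positions and is weakly decreasing in the positions $i\ge j$.
   Context: Fix an integer $m>0$. A Ferrers board is given by a weakly increasing sequence of non-negative integers $B=(b_1,\ldots,b_n)$ of column heights (cells in column $i$, rows $1,\ldots,b_i$, of the first quadrant); prepending height-$0$ columns on the left does not change the board, and boards are compared with the same number of columns by such padding. The rows are partitioned into levels: level $t$ consists of rows $(t-1)m+1,\ldots,tm$. An $m$-level rook placement of $k$ rooks is a set of $k$ cells of $B$, no two in the same level or the same column; $r_{k,m}(B)$ is their number, and two boards are $m$-level rook equivalent if they have equal $r_{k,m}$ for all $k\ge0$. For an integer $o$, $\lfloor o\rfloor_m$ is the largest multiple of $m$ that is $\le o$. $B$ is singleton if for each $i<n$, $b_i-\lfloor b_i\rfloor_m\ne0$ implies $\lfloor b_i\rfloor_m<\lfloor b_{i+1}\rfloor_m$. The $m$-level root vector of $B$ is $\xi_m(B)=\langle 0-b_1,m-b_2,\ldots,m(n-1)-b_n\rangle$. The $m$-level rook equivalence graph $G_m(B)$ of a singleton board $B$ has as vertices all singleton boards $m$-level rook equivalent to $B$, and $\{B_1,B_2\}$ is an edge iff, written with the same number of columns, $B_1$ and $B_2$ differ in exactly two columns $i,j$, where $B_1$ has $k$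 more cells than $B_2$ in column $i$ and $k$ fewer in column $j$, for some $k>0$. *)

From mathcomp Require Import all_boot all_order all_algebra.
Set Implicit Arguments. Unset Strict Implicit. Unset Printing Implicit Defensive.
Import GRing.Theory Num.Theory.

(* A board is represented by the sequence of its column heights
   B = [:: b_1; ...; b_n] (0-indexed in Rocq: column i is nth 0 B i). *)
Definition is_board (B : seq nat) : Prop := sorted leq B.

Definition bheight (B : seq nat) : nat := \max_(b <- B) b.

(* Cells of B: pairs (i, r) with column i < size B and 0-indexed row r,
   meaning the row r+1, with r+1 <= b_i.  Row r+1 lies in level r %/ m + 1. *)
Definition cell_in (B : seq nat) (c : 'I_(size B) * 'I_(bheight B)) : bool :=
  (c.2 : nat) < nth 0 B c.1.

Definition level_placement (m : nat) (B : seq nat)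
    (P : {set 'I_(size B) * 'I_(bheight B)}) : bool :=
  [forall c in P, @cell_in B c] &&
  [forall c in P, forall d in P,
     (c != d) ==> ((c.1 != d.1) && ((c.2 : nat) %/ m != (d.2 : nat) %/ m))].

Definition rook_num (k m : nat) (B : seq nat) : nat :=
  #|[set P : {set 'I_(size B) * 'I_(bheight B)} |
       (#|P| == k) && @level_placement m B P]|.

Definition rook_equiv (m : nat) (B1 B2 : seq nat) : Prop :=
  forall k, rook_num k m B1 = rook_num k m B2.

Definition floorm (m o : nat) : nat := o - o %% m.

Definition singleton (m : nat) (B : seq nat) : Prop :=
  forall i, i.+1 < size B ->
    nth 0 B i - floorm m (nth 0 B i) != 0 ->
    floorm m (nth 0 B i) < floorm m (nth 0 B i.+1).

(* m-level root vector: xi_i = m*i - b_{i+1} (0-indexed i). *)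
Definition root_vec (m : nat) (B : seq nat) : seq int :=
  [seq ((m * i)%:Z - (nth 0 B i)%:Z)%R | i <- iota 0 (size B)].

Definition pad (L : nat) (B : seq nat) : seq nat := nseq (L - size B) 0 ++ B.

(* Edge of the rook equivalence graph: written with the same number of
   columns, B1 and B2 differ in exactly two columns i, j, with B1 having
   k > 0 more cells in column i and k fewer in column j. *)
Definition graph_edge (B1 B2 : seq nat) : Prop :=
  let L := maxn (size B1) (size B2) in
  let p1 := pad L B1 in let p2 := pad L B2 in
  exists i j k, [/\ i < L, j < L, i != j & 0 < k] /\
    [/\ nth 0 p1 i = nth 0 p2 i + k, nth 0 p2 j = nth 0 p1 j + k &
    forall l, l < L -> l != i -> l != j -> nth 0 p1 l = nth 0 p2 l].

Definition graph_vertex (m : nat) (B C : seq nat) : Prop :=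
  [/\ is_board C, singleton m C & rook_equiv m B C].

Inductive connected (V : seq nat -> Prop) (E : seq nat -> seq nat -> Prop)
  : seq nat -> seq nat -> Prop :=
| conn_refl x : V x -> connected V E x x
| conn_step x y z : V x -> E x y -> connected V E y z -> connected V E x z.

(* For a singleton board the m-level rook numbers depend only on the multiset of
   root entries: appending a column of height b to a singleton board B0 with n
   columns gives r_{k+1} = r_{k+1}(B0) + (b - m k) r_k(B0), because each of the k
   rooks of B0 blocks a whole level lying below b; hence
   sum_k r_k (x - 0 m)(x - 1 m)...(x - (n-k-1) m) = prod_i (x - xi_i).
   Consecutive root entries of a singleton board are characterised locally:
   xi_{i+1} may not exceed the least multiple of m above xi_i.  So exchanging
   xi_p < xi_q (p < q) moves cells from column p to column q, an edge of G_m(B),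
   and stays among singleton boards when xi_q <= xi_{p-1} and no entry after q
   exceeds xi_p.  A selection sort of the entries after j that always exchanges
   with the last larger entry keeps these conditions, lowers column p at each
   exchange, and ends with a root vector weakly decreasing from j on. *)

From mathcomp Require Import all_boot all_order all_algebra perm.
From mathcomp Require Import zify ring.
Import Order.TTheory GRing.Theory Num.Theory.
Set Implicit Arguments. Unset Strict Implicit. Unset Printing Implicit Defensive.

Lemma floormE m o : floorm m o = o %/ m * m.
Proof. by rewrite /floorm {1}(divn_eq o m) addnK. Qed.

Lemma board_nth_leq B i i' : is_board B -> i <= i' -> i' < size B ->
  nth 0 B i <= nth 0 B i'.
Proof.
move=> sB ii' i's; apply: (sorted_leq_nth leq_trans leqnn 0 sB); rewrite ?inE //.
exact: leq_ltn_trans i's.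
Qed.

Definition xi (m : nat) (B : seq nat) (i : nat) : int := (m * i)%:Z - (nth 0 B i)%:Z.

Lemma nth_root_vec m B i : i < size B -> nth 0%R (root_vec m B) i = xi m B i.
Proof. by move=> hi; rewrite /root_vec (nth_map 0) ?size_iota // nth_iota. Qed.

Definition root_step (m : nat) (x y : int) :=
  forall t : int, (x < t * m%:Z)%R -> (y <= t * m%:Z)%R.

Lemma root_step_le m x y : (y <= x)%R -> root_step m x y.
Proof. by move=> yx t xt; apply/ltW/(le_lt_trans yx). Qed.

Lemma root_step_trans_l m x x' y : root_step m x y -> (x <= x')%R -> root_step m x' y.
Proof. by move=> h xx' t x't; apply/h/(le_lt_trans xx'). Qed.

Lemma root_step_trans_r m x y y' : root_step m x y -> (y' <= y)%R -> root_step m x y'.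
Proof. by move=> h y'y t xt; apply: le_trans y'y (h t xt). Qed.

Lemma root_step_columnsP m i c d : 0 < m ->
  (c <= d /\ (c - floorm m c != 0 -> floorm m c < floorm m d)) <->
  root_step m ((m * i)%:Z - c%:Z) ((m * i.+1)%:Z - d%:Z).
Proof.
move=> m_gt0; have cf : c - c %/ m * m = c %% m by rewrite {1}(divn_eq c m) addKn.
rewrite !floormE cf.
have ec := divn_eq c m; have hc := ltn_pmod c m_gt0.
have ed := divn_eq d m; have hd := ltn_pmod d m_gt0.
move: ec ed hc hd; set qc := c %/ m; set rc := c %% m; set qd := d %/ m.
move=> ec ed hc hd; split.
- move=> [cd hs] t ht; case: (posnP rc) => [rc0|rcp].
  + have qq : qc <= qd by nia.
    have : (1 <= t - i%:Z + qc%:Z)%R by nia.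
    nia.
  + have qq : qc < qd by have := hs ltac:(by rewrite -lt0n); nia.
    have : (0 <= t - i%:Z + qc%:Z)%R by nia.
    nia.
- move=> h; case: (posnP rc) => [rc0|rcp].
  + have := h (i%:Z - qc%:Z + 1)%R ltac:(nia); split; [nia | by []].
  + have := h (i%:Z - qc%:Z)%R ltac:(nia); split; [nia | move=> _; nia].
Qed.

Lemma singleton_boardP m C : 0 < m ->
  (is_board C /\ singleton m C) <->
  (forall i, i.+1 < size C -> root_step m (xi m C i) (xi m C i.+1)).
Proof.
move=> m_gt0; split=> [[sC sgC] i hi | h].
  by apply/root_step_columnsP => //; split; [move/(sortedP 0): sC; apply | exact: sgC].
split; first apply/(sortedP 0).
all: by move=> i /h /root_step_columnsP [].
Qed.

Lemma root_step_level m i c d r :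
  root_step m ((m * i)%:Z - c%:Z) ((m * i.+1)%:Z - d%:Z) -> r < c ->
  m * (r %/ m).+1 <= d.
Proof.
move=> h rc; have er := divn_eq r m.
have := h (i%:Z - (r %/ m)%:Z)%R; nia.
Qed.

Lemma level_fits_later m B i i' r : 0 < m -> is_board B -> singleton m B ->
  i < i' -> i' < size B -> r < nth 0 B i -> m * (r %/ m).+1 <= nth 0 B i'.
Proof.
move=> m_gt0 sB sgB ii' i'n ri.
have /root_step_level : root_step m (xi m B i) (xi m B i.+1).
  by apply: (singleton_boardP _ m_gt0).1 => //; exact: leq_ltn_trans i'n.
by move/(_ _ ri)/leq_trans; apply; apply: board_nth_leq.
Qed.

Lemma board_rcons B0 b : is_board (rcons B0 b) -> is_board B0.
Proof. by rewrite /is_board -cats1 => /cat_sorted2[]. Qed.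

Lemma singleton_rcons m B0 b : singleton m (rcons B0 b) -> singleton m B0.
Proof.
move=> sgB i iS; have := sgB i; rewrite size_rcons !nth_rcons iS (ltn_trans _ iS) //.
by apply; apply: ltn_trans iS _.
Qed.

Section GridPlacements.
Variables (N H m : nat).
Local Notation cell := ('I_N * 'I_H)%type.

(* [level_placement] inside a fixed N x H grid, so that a board and the board
   without its last column have placements of the same type. *)

Definition grid_placement (B : seq nat) (P : {set cell}) : bool :=
  [forall c in P, (c.2 : nat) < nth 0 B c.1] &&
  [forall c in P, forall d in P,
     (c != d) ==> ((c.1 != d.1) && ((c.2 : nat) %/ m != (d.2 : nat) %/ m))].

Definition placements k B := [set P : {set cell} | (#|P| == k) && grid_placement B P].

Definition grid_rook_num k B := #|placements k B|.

Lemma grid_placementP B (P : {set cell}) : reflect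
  ((forall c, c \in P -> (c.2 : nat) < nth 0 B c.1) /\
   (forall c d, c \in P -> d \in P -> c != d ->
      c.1 != d.1 /\ (c.2 : nat) %/ m != (d.2 : nat) %/ m))
  (grid_placement B P).
Proof.
apply: (iffP andP) => [[/forall_inP h1 /forall_inP h2]|[h1 h2]]; split => //.
- by move=> c d cP dP cd; have /forall_inP/(_ d dP)/implyP/(_ cd)/andP := h2 c cP.
- exact/forall_inP.
- apply/forall_inP => c cP; apply/forall_inP => d dP; apply/implyP => cd.
  by have [-> ->] := h2 c d cP dP cd.
Qed.

Lemma grid_rook_num0 B : grid_rook_num 0 B = 1.
Proof.
rewrite /grid_rook_num (_ : placements 0 B = [set set0]) ?cards1 //.
apply/setP => P; rewrite !inE; apply/andP/eqP => [[/eqP/cards0_eq //]|->].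
by rewrite cards0; split => //; apply/grid_placementP; split => [c|c d]; rewrite inE.
Qed.

Lemma grid_rook_num_nil k : grid_rook_num k.+1 [::] = 0.
Proof.
apply/eqP; rewrite cards_eq0; apply/eqP/setP => P; rewrite !inE.
apply/negbTE/negP => /andP[/eqP cP /grid_placementP[h1 _]].
have : 0 < #|P| by rewrite cP.
by rewrite card_gt0 => /set0Pn[c /h1]; rewrite nth_nil.
Qed.

End GridPlacements.

Lemma rook_numE k m B : rook_num k m B = grid_rook_num (size B) (bheight B) m k B.
Proof. by []. Qed.

Lemma ltn_level_split m l r : 0 < m ->
  (r < l.+1 * m : nat) = (r < l * m : nat) + (r %/ m == l : nat).
Proof. by move=> m_gt0; rewrite -!ltn_divLR // ltnS leq_eqVlt; case: ltngtP. Qed.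

Lemma sum_ord_ltn H b : b <= H -> \sum_(r < H) (r < b : nat) = b.
Proof.
move=> bH; rewrite -(big_mkord xpredT (fun r => (r < b : nat))).
rewrite (big_cat_nat (leq0n b) bH) /=.
rewrite [X in _ + X]big1_seq => [|r]; last first.
  by rewrite mem_index_iota => /andP[_ /andP[/leq_gtF ->]].
rewrite addn0 (eq_big_nat _ _ (F2 := fun=> 1)) => [|r /andP[_ ->] //].
by rewrite sum_nat_const_nat subn0 muln1.
Qed.

Lemma sum_ord_level H m l : 0 < m -> l.+1 * m <= H ->
  \sum_(r < H) (r %/ m == l : nat) = m.
Proof.
move=> m_gt0 lH; have := sum_ord_ltn lH.
rewrite (eq_bigr _ (fun (r : 'I_H) _ => ltn_level_split l r m_gt0)) big_split /=.
by rewrite sum_ord_ltn ?(leq_trans _ lH) ?leq_pmul2r // mulSn; lia.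
Qed.

Section AddColumn.
Variables (N H m : nat) (B0 : seq nat) (b : nat).
Hypotheses (m_gt0 : 0 < m) (B0_lt_N : size B0 < N) (b_le_H : b <= H).
Hypotheses (board_B : is_board (rcons B0 b)) (singleton_B : singleton m (rcons B0 b)).
Local Notation cell := ('I_N * 'I_H)%type.
Local Notation n := (size B0).
Local Notation B := (rcons B0 b).
Local Notation placements := (placements N H m).

Let ncol : 'I_N := Ordinal B0_lt_N.

Definition last_column : {set cell} := [set c | c.1 == ncol].

Definition meets_last : {set {set cell}} := [set P | P :&: last_column != set0].

Definition add_rook (r : 'I_H) (P : {set cell}) := (ncol, r) |: P.

Definition free_rows (P : {set cell}) :=
  [set r : 'I_H | (r < b) && [forall c in P, (c.2 : nat) %/ m != r %/ m]].

Lemma nth_rcons_B0 i : i != n -> nth 0 B i = nth 0 B0 i.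
Proof.
rewrite nth_rcons; case: ltnP => // ni; rewrite eq_sym => /negbTE ->.
by rewrite nth_default.
Qed.

Lemma placement_B0_cell k P c : P \in placements k B0 -> c \in P ->
  c.1 < n /\ (c.2 : nat) < nth 0 B0 c.1.
Proof.
rewrite inE => /andP[_ /grid_placementP[cellP _]] /cellP c_in; split=> //.
by move: c_in; case: (ltnP c.1 n) => // ?; rewrite nth_default.
Qed.

Lemma placement_B0_level k P c : P \in placements k B0 -> c \in P ->
  m * ((c.2 : nat) %/ m).+1 <= b.
Proof.
move=> PS /(placement_B0_cell PS) [c_lt c_in].
have := @level_fits_later m B c.1 n c.2 m_gt0 board_B singleton_B c_lt.
by rewrite size_rcons ltnSn !nth_rcons c_lt ltnn eqxx; apply.
Qed.

Lemma placement_B0_distinct k P c d : P \in placements k B0 -> c \in P -> d \in P ->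
  c != d -> c.1 != d.1 /\ (c.2 : nat) %/ m != (d.2 : nat) %/ m.
Proof. by rewrite inE => /andP[_ /grid_placementP[_]]; apply. Qed.

Lemma placements_off_last k : placements k B :\: meets_last = placements k B0.
Proof.
have offP (P : {set cell}) : (P :&: last_column == set0) = [forall c in P, c.1 != ncol].
  apply/eqP/forall_inP => [P0 c cP|offP]; last first.
    apply/setP => c; rewrite !inE; apply/negbTE/andP => -[cP /eqP cl].
    by move: (offP c cP); rewrite cl eqxx.
  apply/negP => cl; have : c \in P :&: last_column by rewrite !inE cP.
  by rewrite P0 inE.
have same_cells (P : {set cell}) : [forall c in P, c.1 != ncol] ->
    grid_placement m B P = grid_placement m B0 P.
  move=> /forall_inP offl; congr andb; apply: eq_forallb_in => c cP.
  by rewrite nth_rcons_B0 //; exact: offl.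
apply/setP => P; rewrite inE [P \in meets_last]inE negbK offP.
apply/andP/idP => [[offl PS]|PS].
  by move: PS; rewrite !inE same_cells.
have offl : [forall c in P, c.1 != ncol].
  apply/forall_inP => c cP; have [c_lt _] := placement_B0_cell PS cP.
  by rewrite -(inj_eq val_inj) /= ltn_eqF.
by split=> //; move: PS; rewrite !inE same_cells.
Qed.

Lemma card_occupied_rows k P : P \in placements k B0 ->
  \sum_(r < H) (~~ [forall c in P, (c.2 : nat) %/ m != r %/ m] : nat) = m * k.
Proof.
move=> PS; have occupied_sum (r : 'I_H) :
    (~~ [forall c in P, (c.2 : nat) %/ m != r %/ m] : nat) =
    \sum_(c in P) ((c.2 : nat) %/ m == r %/ m : nat).
  rewrite negb_forall_in; case: existsP => [[c0 /andP[c0P /negPn/eqP e0]]|none].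
    rewrite (bigD1 c0) //= e0 eqxx big1 // => c /andP[cP cc0].
    by have [_] := placement_B0_distinct PS cP c0P cc0; rewrite e0 => /negbTE ->.
  rewrite big1 // => c cP; case: eqP => // e; case: none.
  by exists c; rewrite cP /= e eqxx.
rewrite (eq_bigr _ (fun r _ => occupied_sum r)) exchange_big /=.
rewrite (eq_bigr (fun=> m)) => [|c cP]; last first.
  rewrite (eq_bigr (fun r : 'I_H => (r %/ m == c.2 %/ m : nat))) => [|r _]; last first.
    by rewrite eq_sym.
  by rewrite sum_ord_level // mulnC (leq_trans (placement_B0_level PS cP)).
by move: PS; rewrite sum_nat_const inE => /andP[/eqP -> _]; rewrite mulnC.
Qed.

Lemma card_free_rows k P : P \in placements k B0 -> #|free_rows P| + m * k = b.
Proof.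
move=> PS; rewrite -(card_occupied_rows PS) -[RHS](sum_ord_ltn b_le_H).
rewrite -sum1_card big_mkcond -big_split /=; apply: eq_bigr => r _.
rewrite inE; case: (boolP [forall c in P, _]) => [_|]; first by rewrite andbT addn0.
rewrite negb_forall_in => /existsP[c /andP[cP /negPn/eqP e]].
have := placement_B0_level PS cP; rewrite e andbF => lvl.
suff -> : (r : nat) < b by [].
by rewrite (leq_trans _ lvl) // mulnC -ltn_divLR.
Qed.

Lemma add_rook_placement k P r : P \in placements k B0 -> r \in free_rows P ->
  [/\ add_rook r P \in placements k.+1 B, add_rook r P \in meets_last
    & add_rook r P :\: last_column = P].
Proof.
move=> PS; rewrite inE => /andP[rb /forall_inP free].
have P_off c : c \in P -> c.1 != ncol.
  by move=> /(placement_B0_cell PS) [c_lt _]; rewrite -(inj_eq val_inj) /= ltn_eqF.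
have nP : (ncol, r) \notin P by apply/negP => /P_off; rewrite eqxx.
move: (PS); rewrite inE => /andP[/eqP cardP /grid_placementP[cellP distP]].
split.
- rewrite inE cardsU1 nP cardP eqxx; apply/grid_placementP; split.
    move=> c; rewrite in_setU1 => /orP[/eqP -> /=|cP]; first by rewrite nth_rcons ltnn eqxx.
    by rewrite nth_rcons_B0 ?cellP //; exact: P_off.
  have new_rook c : c \in P -> c.1 != ncol /\ (c.2 : nat) %/ m != r %/ m.
    by move=> cP; split; [exact: P_off | exact: free].
  move=> c d; rewrite !in_setU1 => /orP[/eqP ->|cP] /orP[/eqP ->|dP]; rewrite ?eqxx //.
  + by move=> _; have [] := new_rook d dP; rewrite /= eq_sym => -> /=; rewrite eq_sym.
  + by move=> _; have [-> ->] := new_rook c cP.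
  + exact: distP.
- by rewrite inE; apply/set0Pn; exists (ncol, r); rewrite !inE !eqxx.
- apply/setP => c; rewrite !inE; case: (boolP (c \in P)) => cP.
    by rewrite orbT andbT (P_off c cP).
  by rewrite orbF; case: (c =P (ncol, r)) => [->|]; rewrite ?eqxx ?andbF.
Qed.

Lemma placement_last_rook k P c0 : P \in placements k.+1 B -> c0 \in P -> c0.1 = ncol ->
  [/\ P :\: last_column \in placements k B0, c0.2 \in free_rows (P :\: last_column)
    & P = add_rook c0.2 (P :\: last_column)].
Proof.
move=> PS c0P c0l; move: (PS); rewrite inE => /andP[/eqP cardP /grid_placementP[cellP distP]].
set P' := P :\: last_column.
have P'P c : c \in P' -> c \in P /\ c != c0.
  rewrite !inE => /andP[cl cP]; split=> //; move: cl; apply: contraNneq => ->.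
  by rewrite c0l.
have P_split : P = add_rook c0.2 P'.
  apply/setP => c; rewrite !inE -c0l -surjective_pairing.
  case: (c =P c0) => [-> | /eqP cc0] /=; first by rewrite c0P.
  case cP: (c \in P); rewrite ?andbT ?andbF //.
  by have [] := distP c c0 cP c0P cc0.
have c0P' : c0 \notin P' by rewrite !inE c0l eqxx.
split=> //.
- rewrite inE; apply/andP; split.
    move: cardP; rewrite P_split /add_rook -c0l -surjective_pairing cardsU1 c0P'.
    by rewrite add1n => -[->].
  apply/grid_placementP; split=> [c /[dup] cP' /P'P[cP _] | c d /P'P[cP _] /P'P[dP _]].
    by move: (cellP c cP); rewrite nth_rcons_B0 //; move: cP'; rewrite !inE => /andP[].
  exact: distP.
- rewrite inE; apply/andP; split.
    by move: (cellP c0 c0P); rewrite c0l nth_rcons ltnn eqxx.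
  by apply/forall_inP => c /P'P[cP cc0]; have [] := distP c c0 cP c0P cc0.
Qed.

Lemma placements_last_fiber k P : P \in placements k B0 ->
  [set Q in placements k.+1 B :&: meets_last | Q :\: last_column == P] =
  add_rook^~ P @: free_rows P.
Proof.
move=> PS; apply/setP => Q; rewrite inE; apply/andP/imsetP => [[]|[r rP ->]].
  move=> /setIP[QS]; rewrite inE => /set0Pn[c0 /setIP[c0Q]]; rewrite inE => /eqP c0l.
  have [_ c0free Q_split] := placement_last_rook QS c0Q c0l.
  by move=> /eqP QP; exists c0.2; rewrite -QP.
by have [QS Qlast ->] := add_rook_placement PS rP; rewrite inE QS Qlast.
Qed.

Lemma add_rook_inj k P : P \in placements k B0 -> injective (add_rook^~ P).
Proof.
move=> PS r1 r2 /setP /(_ (ncol, r1)); rewrite !in_setU1 eqxx /= => /esym /orP[/eqP [] //|].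
by move=> /(placement_B0_cell PS) []; rewrite ltnn.
Qed.

Lemma grid_rook_num_rcons k : grid_rook_num N H m k.+1 B =
  grid_rook_num N H m k.+1 B0 + (b - m * k) * grid_rook_num N H m k B0.
Proof.
rewrite /grid_rook_num -(cardsID meets_last) placements_off_last addnC; congr addn.
rewrite -sum1_card (partition_big (fun Q => Q :\: last_column) (mem (placements k B0))).
  rewrite (eq_bigr (fun=> b - m * k)) => [|P PS]; first by rewrite sum_nat_const mulnC.
  rewrite (eq_bigl (mem [set Q in placements k.+1 B :&: meets_last | Q :\: last_column == P])).
    rewrite sum1_card placements_last_fiber // card_imset; last exact: add_rook_inj PS.
    by rewrite -(card_free_rows PS) addnK.
  by move=> Q; rewrite !inE.
move=> Q /setIP[QS]; rewrite inE => /set0Pn[c0 /setIP[c0Q]]; rewrite inE => /eqP c0l.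
by have [] := placement_last_rook QS c0Q c0l.
Qed.

Lemma grid_rook_num_eq0_or k : grid_rook_num N H m k B0 = 0 \/ m * k <= b.
Proof.
case: (posnP (grid_rook_num N H m k B0)) => [|]; [by left | rewrite card_gt0].
by case/set0Pn => P PS; right; rewrite -(card_free_rows PS) leq_addl.
Qed.

End AddColumn.

Section RookPolynomial.
Local Open Scope ring_scope.

Definition mfalling (m : nat) (x : int) (d : nat) : int :=
  \prod_(0 <= l < d) (x - (l * m)%:Z).

Lemma mfallingS m x d : mfalling m x d.+1 = mfalling m x d * (x - (d * m)%:Z).
Proof. by rewrite /mfalling big_nat_recr. Qed.

Lemma mfalling_eq0 m t d : (t < d)%N -> mfalling m (t * m)%:Z d = 0.
Proof.
elim: d => // d IHd; rewrite ltnS leq_eqVlt mfallingS => /orP[/eqP ->|/IHd ->].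
  by rewrite subrr mulr0.
by rewrite mul0r.
Qed.

Lemma mfalling_neq0 m t d : (0 < m)%N -> (d <= t)%N -> mfalling m (t * m)%:Z d != 0.
Proof.
move=> m_gt0; elim: d => [|d IHd] dt; first by rewrite /mfalling big_geq.
rewrite mfallingS mulf_neq0 ?IHd ?(ltnW dt) // subr_eq0 eqz_nat eqn_mul2r.
by rewrite negb_or -lt0n m_gt0 neq_ltn dt orbT.
Qed.

Lemma eq_mfalling_coef m n (a c : nat -> int) : (0 < m)%N ->
  (forall t : nat, \sum_(0 <= d < n.+1) a d * mfalling m (t * m)%:Z d =
                   \sum_(0 <= d < n.+1) c d * mfalling m (t * m)%:Z d) ->
  forall d, (d <= n)%N -> a d = c d.
Proof.
(* At x = d m the terms of index above d vanish, those below d by induction. *)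
move=> m_gt0 eq_ac; elim/ltn_ind => d IHd dn; move/eqP: (eq_ac d).
rewrite -subr_eq0 -sumrB (eq_bigr (fun i => (a i - c i) * mfalling m (d * m)%:Z i)); last first.
  by move=> i _; rewrite mulrBl.
rewrite (big_cat_nat _ (n := d)) ?(ltnW dn) //=; last exact: leqW.
rewrite (big_cat_nat _ (m := d) (n := d.+1)) //=.
rewrite big_nat1 [\sum_(0 <= i < d) _]big1_seq => [|i]; last first.
  rewrite mem_index_iota => /andP[_ /andP[_ id]].
  by rewrite IHd ?subrr ?mul0r // (leq_trans (ltnW id) dn).
rewrite [\sum_(d.+1 <= i < n.+1) _]big1_seq => [|i]; last first.
  by rewrite mem_index_iota => /andP[_ /andP[di _]]; rewrite mfalling_eq0 ?mulr0.
rewrite add0r addr0 mulf_eq0 (negbTE (mfalling_neq0 m_gt0 (leqnn d))) orbF subr_eq0.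
by move/eqP.
Qed.

Section GridBoard.
Variables (N H m : nat).
Hypothesis m_gt0 : (0 < m)%N.

Definition grid_board (B : seq nat) := [/\ is_board B, singleton m B, (size B <= N)%N &
  forall i, (nth 0 B i <= H)%N].

Lemma grid_board_rcons B0 b : grid_board (rcons B0 b) ->
  [/\ grid_board B0, (size B0 < N)%N & (b <= H)%N].
Proof.
case=> sB sgB sN hH; split => //.
- split; [exact: board_rcons sB | exact: singleton_rcons sgB | |].
    by apply: leq_trans sN; rewrite size_rcons.
  move=> i; case: (ltnP i (size B0)) => hi; last by rewrite nth_default.
  by have := hH i; rewrite nth_rcons hi.
- by move: sN; rewrite size_rcons.
- by have := hH (size B0); rewrite nth_rcons ltnn eqxx.
Qed.

Lemma grid_rook_num_gt_size B k : grid_board B -> (size B < k)%N ->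
  grid_rook_num N H m k B = 0%N.
Proof.
elim/last_ind: B k => [|B0 b IHB] [|k] //; first by rewrite grid_rook_num_nil.
move=> /[dup] [[sB sgB _ _]] /grid_board_rcons[gB0 B0N bH]; rewrite size_rcons ltnS => B0k.
by rewrite (grid_rook_num_rcons m_gt0 B0N bH sB sgB) !IHB ?muln0 // ltnW.
Qed.

Definition rook_poly (B : seq nat) (x : int) : int :=
  \sum_(0 <= k < (size B).+1) (grid_rook_num N H m k B)%:Z * mfalling m x (size B - k).

Lemma rook_poly_nil x : rook_poly [::] x = 1.
Proof. by rewrite /rook_poly big_nat1 grid_rook_num0 mul1r /mfalling big_geq. Qed.

Lemma rook_poly_rcons B0 b x : grid_board (rcons B0 b) ->
  rook_poly (rcons B0 b) x = rook_poly B0 x * (x - xi m (rcons B0 b) (size B0)).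
Proof.
move=> /[dup] [[sB sgB _ _]] /grid_board_rcons[gB0 B0N bH].
have weight k : ((b - m * k) * grid_rook_num N H m k B0)%:Z =
    (grid_rook_num N H m k B0)%:Z * (b%:Z - (m * k)%:Z).
  case: (grid_rook_num_eq0_or N m_gt0 bH sB sgB k) => [->|mk].
    by rewrite muln0 mul0r.
  by rewrite PoszM -subzn // mulrC.
set n := size B0.
have last_factor k : (k < n.+1)%N ->
    (grid_rook_num N H m k B0)%:Z * mfalling m x (n - k) * (x - ((m * n)%:Z - b%:Z)) =
    (grid_rook_num N H m k B0)%:Z * mfalling m x (n.+1 - k) +
    (grid_rook_num N H m k B0)%:Z * mfalling m x (n - k) * (b%:Z - (m * k)%:Z).
  move=> kn; rewrite subSn // mfallingS mulnBl -subzn; last by rewrite leq_mul2r -ltnS kn orbT.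
  rewrite !PoszM; ring.
rewrite /xi nth_rcons ltnn eqxx /rook_poly size_rcons -/n big_nat_recl //=.
rewrite grid_rook_num0 mul1r subn0 mulr_suml.
rewrite [RHS](eq_big_nat _ _ (fun k kn => last_factor k (andP kn).2)) big_split /=.
rewrite [in RHS]big_nat_recl //= grid_rook_num0 mul1r subn0 -addrA; congr (_ + _).
rewrite (eq_big_nat _ _ (F2 := fun k =>
    (grid_rook_num N H m k.+1 B0)%:Z * mfalling m x (n.+1 - k.+1) +
    (grid_rook_num N H m k B0)%:Z * mfalling m x (n - k) * (b%:Z - (m * k)%:Z))); last first.
  move=> k _; rewrite (grid_rook_num_rcons m_gt0 B0N bH sB sgB).
  by rewrite PoszD weight mulrDl subSS -!mulrA [(b%:Z - _) * _]mulrC.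
rewrite big_split /= big_nat_recr //= (grid_rook_num_gt_size gB0 (ltnSn n)).
by rewrite mul0r addr0.
Qed.

Lemma rook_poly_factor B x : grid_board B ->
  rook_poly B x = \prod_(0 <= i < size B) (x - xi m B i).
Proof.
elim/last_ind: B => [_|B0 b IHB gB]; first by rewrite rook_poly_nil big_geq.
rewrite rook_poly_rcons // IHB; last by have [] := grid_board_rcons gB.
rewrite size_rcons big_nat_recr //=; congr (_ * _); apply: eq_big_nat => i /andP[_ iB0].
by rewrite /xi nth_rcons iB0.
Qed.

End GridBoard.

Lemma nth_le_bheight B i : (nth 0 B i <= bheight B)%N.
Proof.
case: (ltnP i (size B)) => iB; last by rewrite nth_default.
by apply: (leq_bigmax_seq (F := id)) => //; apply: mem_nth.
Qed.

Lemma rook_poly_rev N H m B x : rook_poly N H m B x =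
  \sum_(0 <= d < (size B).+1) (grid_rook_num N H m (size B - d)%N B)%:Z * mfalling m x d.
Proof.
rewrite /rook_poly big_nat_rev /=; apply: eq_big_nat => d /andP[_ dB].
by rewrite add0n subSS subKn // -ltnS.
Qed.

Lemma rook_equiv_root_prod m C D : (0 < m)%N ->
  is_board C -> singleton m C -> is_board D -> singleton m D -> size C = size D ->
  (forall x : int, \prod_(0 <= i < size C) (x - xi m C i) =
                   \prod_(0 <= i < size D) (x - xi m D i)) ->
  rook_equiv m C D.
Proof.
move=> m_gt0 sC sgC sD sgD CD eq_prod k; rewrite !rook_numE.
have gC : grid_board (size C) (bheight C) m C by split=> // i; apply: nth_le_bheight.
have gD : grid_board (size D) (bheight D) m D by split=> // i; apply: nth_le_bheight.
case: (ltnP (size C) k) => [Ck|kC]; first by rewrite !grid_rook_num_gt_size // -CD.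
set n := size C; pose coef B d := (grid_rook_num (size B) (bheight B) m (n - d)%N B)%:Z.
have eq_coef : forall t : nat,
    \sum_(0 <= d < n.+1) coef C d * mfalling m (t * m)%:Z d =
    \sum_(0 <= d < n.+1) coef D d * mfalling m (t * m)%:Z d.
  move=> t; rewrite /coef -rook_poly_rev (rook_poly_factor m_gt0 _ gC) eq_prod.
  by rewrite -(rook_poly_factor m_gt0 _ gD) /n CD -rook_poly_rev.
have := eq_mfalling_coef m_gt0 eq_coef (leq_subr k n).
by rewrite /coef subKn // => -[].
Qed.

End RookPolynomial.

Definition swap_index (p q i : nat) : nat := if i == p then q else if i == q then p else i.

Lemma root_steps_swap m (f : nat -> int) n p q : p < q -> q < n ->
  (f q <= f p.-1)%R -> (f p < f q)%R -> (forall i, q < i -> i < n -> (f i <= f p)%R) ->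
  (forall i, i.+1 < n -> root_step m (f i) (f i.+1)) ->
  forall i, i.+1 < n -> root_step m (f (swap_index p q i)) (f (swap_index p q i.+1)).
Proof.
move=> pq qn fq_le fp_lt tail steps i iS.
have swap_p : swap_index p q p = q by rewrite /swap_index eqxx.
have swap_q : swap_index p q q = p by rewrite /swap_index gtn_eqF ?eqxx.
have swap_id k : k != p -> k != q -> swap_index p q k = k.
  by rewrite /swap_index => /negbTE-> /negbTE->.
have [-> | ip] := eqVneq i p.
  rewrite swap_p; have [-> | Sp_q] := eqVneq p.+1 q; first by rewrite swap_q; exact/root_step_le/ltW.
  rewrite swap_id ?(gtn_eqF (ltnSn p)) //; apply: root_step_trans_l (ltW fp_lt).
  exact/steps/(leq_ltn_trans pq).
have [iq | iq] := eqVneq i q.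
  rewrite iq swap_q swap_id ?(gtn_eqF (ltnSn q)) ?(gtn_eqF (ltnW _)) //.
  by apply/root_step_le/tail; rewrite -?iq.
rewrite swap_id //; have [Si_p | Sip] := eqVneq i.+1 p.
  by rewrite Si_p swap_p; apply: root_step_le; move: fq_le; rewrite -Si_p.
have [Si_q | Siq] := eqVneq i.+1 q; last by rewrite swap_id //; exact: steps.
by rewrite Si_q swap_q; apply: root_step_trans_r (ltW fp_lt); rewrite -Si_q; exact: steps.
Qed.

(* The new heights b_q - m (q - p) and b_p + m (q - p) exchange xi_p and xi_q;
   as the subtractions are truncated, the lemmas assume m q <= b_q + m p. *)
Definition swap_roots m (C : seq nat) p q :=
  set_nth 0 (set_nth 0 C p (nth 0 C q + m * p - m * q)) q (nth 0 C p + m * q - m * p).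

Section SwapRoots.
Variables (m : nat) (C : seq nat) (p q : nat).
Hypotheses (pq : p < q) (qC : q < size C) (height_ok : m * q <= nth 0 C q + m * p).
Local Notation C' := (swap_roots m C p q).

Lemma size_swap_roots : size C' = size C.
Proof.
by rewrite !size_set_nth (maxn_idPr (ltn_trans pq qC)) (maxn_idPr qC).
Qed.

Lemma nth_swap_roots i : nth 0 C' i =
  if i == q then nth 0 C p + m * q - m * p
  else if i == p then nth 0 C q + m * p - m * q else nth 0 C i.
Proof. by rewrite nth_set_nth /=; case: eqP => // _; rewrite nth_set_nth. Qed.

Lemma xi_swap_roots i : xi m C' i = xi m C (swap_index p q i).
Proof.
have mpq : m * p <= m * q by rewrite leq_mul2l ltnW ?orbT.
rewrite /xi nth_swap_roots /swap_index; have [-> | iq] := eqVneq i q.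
  by rewrite gtn_eqF //; apply/eqP; rewrite subr_eq; apply/eqP; lia.
have [-> | //] := eqVneq i p; apply/eqP; rewrite subr_eq; apply/eqP; lia.
Qed.

Lemma prod_xi_swap_roots (x : int) :
  (\prod_(0 <= i < size C') (x - xi m C' i) = \prod_(0 <= i < size C) (x - xi m C i))%R.
Proof.
have pC := ltn_trans pq qC.
rewrite size_swap_roots !big_mkord.
rewrite [RHS](reindex_inj (@perm_inj _ (tperm (Ordinal pC) (Ordinal qC)))).
apply: eq_bigr => i _; rewrite xi_swap_roots /swap_index.
case: tpermP => [->|->|ip iq] /=; rewrite ?eqxx ?(gtn_eqF pq) //.
have /negbTE -> : (i : nat) != p by apply/eqP => ip'; apply: ip; exact: val_inj.
by have /negbTE -> : (i : nat) != q by apply/eqP => iq'; apply: iq; exact: val_inj.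
Qed.

Lemma graph_edge_swap_roots : (xi m C p < xi m C q)%R -> graph_edge C C'.
Proof.
rewrite /xi => lt_pq; have pC := ltn_trans pq qC.
rewrite /graph_edge /pad /= !size_swap_roots maxnn subnn /=.
exists p, q, (nth 0 C p + m * q - m * p - nth 0 C q); split.
  by split=> //; [rewrite neq_ltn pq | lia].
split=> [||l _ lp lq]; rewrite nth_swap_roots ?eqxx ?(ltn_eqF pq) //; [lia | lia |].
by rewrite (negbTE lp) (negbTE lq).
Qed.

Lemma swap_roots_vertex B : 0 < m -> graph_vertex m B C ->
  (xi m C q <= xi m C p.-1)%R -> (xi m C p < xi m C q)%R ->
  (forall i, q < i -> i < size C -> (xi m C i <= xi m C p)%R) -> graph_vertex m B C'.
Proof.
move=> m_gt0 [sC sgC eqBC] q_le p_lt tail.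
have [sC' sgC'] : is_board C' /\ singleton m C'.
  apply/(singleton_boardP _ m_gt0) => i; rewrite size_swap_roots !xi_swap_roots.
  by apply: root_steps_swap => //; apply/(singleton_boardP _ m_gt0).
split=> // k; rewrite eqBC; apply: rook_equiv_root_prod => //.
  by rewrite size_swap_roots.
by move=> x; rewrite prod_xi_swap_roots.
Qed.

End SwapRoots.

Lemma swap_height_ok m C p q : (xi m C q <= xi m C p.-1)%R -> m * q <= nth 0 C q + m * p.
Proof. by case: p => [|p]; rewrite /xi /=; nia. Qed.

Lemma last_above (f : nat -> int) p n :
  (exists q, [/\ p < q, q < n, (f p < f q)%R & forall i, q < i -> i < n -> (f i <= f p)%R]) \/
  (forall i, p < i -> i < n -> (f i <= f p)%R).
Proof.
elim: n => [|n [[q [pq qn lt_pq tail]] | below]]; first by right.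
- have [fp_lt | fn_le] := ltP (f p) (f n).
    by left; exists n; split=> // [|i ni]; [exact: ltn_trans pq qn | rewrite ltnS leqNgt ni].
  left; exists q; split=> // [|i qi]; first exact: ltnW.
  by rewrite ltnS leq_eqVlt => /predU1P[-> //|]; apply: tail.
- have [pn | np] := ltnP p n; last first.
    by right=> i pi; rewrite ltnS => /(leq_trans pi); rewrite ltnNge np.
  have [fp_lt | fn_le] := ltP (f p) (f n).
    by left; exists n; split=> // i ni; rewrite ltnS leqNgt ni.
  by right=> i pi; rewrite ltnS leq_eqVlt => /predU1P[-> //|]; apply: below.
Qed.

Section SelectionSort.
Variables (m : nat) (B : seq nat) (j : nat).
Hypothesis m_gt0 : 0 < m.
Local Notation n := (size B).
Local Notation V := (graph_vertex m B).

Definition sort_invariant C p := [/\ size C = n, V C, j < p <= n,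
  forall i i', j <= i -> i <= i' -> i' < p -> (xi m C i' <= xi m C i)%R &
  forall i, p <= i -> i < n -> (xi m C i <= xi m C p.-1)%R].

Definition reaches_sorted C := exists D, [/\ size D = n, connected V graph_edge C D,
  forall i, i <= j -> xi m D i = xi m C i &
  forall i i', j <= i -> i <= i' -> i' < n -> (xi m D i' <= xi m D i)%R].

Lemma reaches_sorted_refl C : sort_invariant C n -> reaches_sorted C.
Proof. by case=> sC VC _ dec _; exists C; split=> //; exact: conn_refl. Qed.

Lemma reaches_sorted_edge C C' : V C -> graph_edge C C' ->
  (forall i, i <= j -> xi m C' i = xi m C i) -> reaches_sorted C' -> reaches_sorted C.
Proof.
move=> VC CC' pre [D [sD C'D preD sortD]]; exists D; split=> //.
  exact: conn_step CC' C'D.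
by move=> i ij; rewrite preD // pre.
Qed.

Lemma sort_invariant_advance C p : sort_invariant C p -> p < n ->
  (forall i, p < i -> i < n -> (xi m C i <= xi m C p)%R) -> sort_invariant C p.+1.
Proof.
case=> sC VC /andP[jp _] dec tail pn below; split=> //; first by rewrite pn ltnW.
move=> i i' ji ii'; rewrite ltnS leq_eqVlt => /predU1P[i'p | /(dec i i' ji ii') //].
rewrite {}i'p in ii' *; move: ii'; rewrite leq_eqVlt => /predU1P[-> // | ip].
have p_gt0 : 0 < p by apply: leq_ltn_trans jp.
apply: le_trans (tail p (leqnn p) pn) _; apply: dec => //.
  by rewrite -ltnS prednK.
by rewrite prednK.
Qed.

Lemma sort_invariant_swap C p q : sort_invariant C p -> p < q -> q < n ->
  (xi m C p < xi m C q)%R -> (forall i, q < i -> i < n -> (xi m C i <= xi m C p)%R) ->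
  [/\ sort_invariant (swap_roots m C p q) p, graph_edge C (swap_roots m C p q),
      nth 0 (swap_roots m C p q) p < nth 0 C p &
      forall i, i <= j -> xi m (swap_roots m C p q) i = xi m C i].
Proof.
case=> sC VC /andP[jp pn] dec tail pq qn lt_pq below.
have p_gt0 : 0 < p by apply: leq_ltn_trans jp.
have q_le : (xi m C q <= xi m C p.-1)%R by apply: tail => //; exact: ltnW.
have height_ok := swap_height_ok q_le.
have qC : q < size C by rewrite sC.
have swap_lt i : i < p -> swap_index p q i = i.
  by move=> ip; rewrite /swap_index ltn_eqF // ltn_eqF // (ltn_trans ip).
have swap_ge i : p <= i -> i < n -> p <= swap_index p q i < n.
  rewrite /swap_index; case: eqP => [_ _ _|_]; first by rewrite (ltnW pq).
  by case: eqP => [_ _ _|_ -> ->]; rewrite ?leqnn ?(ltn_trans pq).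
split.
- split=> //; first by rewrite size_swap_roots.
  + apply: swap_roots_vertex => // i qi; rewrite sC; exact: below.
  + by rewrite jp pn.
  + move=> i i' ji ii' i'p; rewrite !xi_swap_roots // !swap_lt ?(leq_ltn_trans ii') //.
    exact: dec.
  + move=> i pi iS; rewrite !xi_swap_roots // (swap_lt p.-1) ?prednK //.
    by have /andP[] := swap_ge i pi iS; apply: tail.
- exact: graph_edge_swap_roots.
- by rewrite nth_swap_roots // (ltn_eqF pq) eqxx; move: lt_pq; rewrite /xi; lia.
- by move=> i ij; rewrite xi_swap_roots // swap_lt // (leq_ltn_trans ij).
Qed.

Lemma sort_invariant_reaches_sorted C p : sort_invariant C p -> reaches_sorted C.
Proof.
move: {2}(n - p) (erefl (n - p)) => d; elim: d C p => [|d IHd] C p np inv.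
  suff pn : p = n by apply: reaches_sorted_refl; rewrite -pn.
  by case: inv => _ _ /andP[_ pn] _ _; apply/eqP; rewrite eqn_leq pn -subn_eq0 np.
have pn : p < n by rewrite -subn_gt0 np.
move: {2}(nth 0 C p) (erefl (nth 0 C p)) => h; elim/ltn_ind: h C inv => h IHh C inv hC.
(* Exchanging with the last larger entry keeps the invariant and lowers column p. *)
have [[q [pq qn lt_pq below]] | below] := last_above (xi m C) p n.
  have [inv' edge lt_h pre] := sort_invariant_swap inv pq qn lt_pq below.
  apply: reaches_sorted_edge edge pre _; first by case: inv.
  by apply: (IHh _ _ _ inv' erefl); rewrite -hC.
by apply: IHd (sort_invariant_advance inv pn below); rewrite subnS np.
Qed.

End SelectionSort.

Theorem lemma19 (m : nat) (B : seq nat) (j : nat) :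
  0 < m -> is_board B -> singleton m B ->
  j < size B ->
  (forall i, i < size B -> (nth 0%R (root_vec m B) i <= nth 0%R (root_vec m B) j)%R) ->
  (forall i, i < j -> (nth 0%R (root_vec m B) i < nth 0%R (root_vec m B) j)%R) ->
  exists B' : seq nat,
    [/\ size B' = size B,
        connected (graph_vertex m B) graph_edge B B',
        (forall i, i <= j -> nth 0%R (root_vec m B') i = nth 0%R (root_vec m B) i) &
        (forall i i', j <= i -> i <= i' -> i' < size B ->
           (nth 0%R (root_vec m B') i' <= nth 0%R (root_vec m B') i)%R)].
Proof.
move=> m_gt0 sB sgB jB xi_j_max _.
have inv : sort_invariant m B j B j.+1.
  split=> //.
  - by rewrite ltnSn.
  - by move=> i i' ji ii' i'j; have -> : i' = i by lia.
  - by move=> i ji iB /=; rewrite -!nth_root_vec //; exact: xi_j_max.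
have [D [sD BD preD sortD]] := sort_invariant_reaches_sorted m_gt0 inv.
exists D; split=> // [i ij | i i' ji ii' i'B].
  by rewrite !nth_root_vec ?sD ?preD // (leq_ltn_trans ij jB).
by rewrite !nth_root_vec ?sD ?sortD // (leq_ltn_trans ii' i'B).
Qed.
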